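(* Let $G$ be a locally Hausdorff, locally compact groupoid acting (continuously, on the left) on a locally Hausdorff, locally compact space $X$. Let $G*X=\{(\gamma,x)\in G\times X: s(\gamma)=r(x)\}$ and $\Theta:G*X\to X\times X$, $\Theta(\gamma,x)=(\gamma\cdot x,x)$. Then $X$ is a proper $G$-space (i.e. $\Theta$ is a proper map) if and only if $\Theta^{-1}(W)$ is compact in $G*X$ for every compact set $W\subset X\times X$.
   Context: A locally Hausdorff, locally compact groupoid is a groupoid with a topology such that the groupoid operations are continuous, $G^{(0)}$ is Hausdorff, each point has a compact Hausdorff neighborhood, and the range map is open. A locally Hausdorff, locally compact space is a topological space in which every point has a compact Hausdorff neighborhood; ''compact'' means the finite-subcover property only (compact sets need not be Hausdorff). A left action of $G$ on $X$ uses a continuous anchor map $r:X\to G^{(0)}$; $\gamma\cdot x$ is defined when $s(\gamma)=r(x)$. A map $f:A\to B$ is proper if $f\times \mathrm{id}_C:A\times C\to B\times C$ is a closed map for every topological space $C$. $X$ is a proper $G$-space if $\Theta$ is proper. *)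

From Stdlib Require Import List.

Set Implicit Arguments.

Definition is_topology {T : Type} (op : (T -> Prop) -> Prop) : Prop :=
  op (fun _ => True) /\
  (forall U V, op U -> op V -> op (fun x => U x /\ V x)) /\
  (forall F : (T -> Prop) -> Prop,
      (forall U, F U -> op U) -> op (fun x => exists U, F U /\ U x)).

Definition closed {T : Type} (op : (T -> Prop) -> Prop) (F : T -> Prop) : Prop :=
  op (fun x => ~ F x).

Definition sub_open {T : Type} (op : (T -> Prop) -> Prop) (P : T -> Prop)
  (U : {x : T | P x} -> Prop) : Prop :=
  exists V, op V /\ forall x : {x : T | P x}, U x <-> V (proj1_sig x).

Definition prod_open {A B : Type} (opA : (A -> Prop) -> Prop) (opB : (B -> Prop) -> Prop)
  (W : A * B -> Prop) : Prop :=
  forall p, W p -> exists U V, opA U /\ opB V /\ U (fst p) /\ V (snd p) /\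
     (forall a b, U a -> V b -> W (a, b)).

Definition continuous {A B : Type} (opA : (A -> Prop) -> Prop) (opB : (B -> Prop) -> Prop)
  (f : A -> B) : Prop :=
  forall V, opB V -> opA (fun a => V (f a)).

Definition image {A B : Type} (f : A -> B) (S : A -> Prop) : B -> Prop :=
  fun b => exists a, S a /\ f a = b.

Definition closed_map {A B : Type} (opA : (A -> Prop) -> Prop) (opB : (B -> Prop) -> Prop)
  (f : A -> B) : Prop :=
  forall F, closed opA F -> closed opB (image f F).

Definition proper_map {A B : Type} (opA : (A -> Prop) -> Prop) (opB : (B -> Prop) -> Prop)
  (f : A -> B) : Prop :=
  forall (C : Type) (opC : (C -> Prop) -> Prop), is_topology opC ->
    closed_map (prod_open opA opC) (prod_open opB opC)
               (fun q : A * C => (f (fst q), snd q)).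

(** Compactness of a subset: finite-subcover property only (no Hausdorffness). *)
Definition compact {T : Type} (op : (T -> Prop) -> Prop) (K : T -> Prop) : Prop :=
  forall F : (T -> Prop) -> Prop,
    (forall U, F U -> op U) ->
    (forall x, K x -> exists U, F U /\ U x) ->
    exists l : list (T -> Prop),
      (forall U, In U l -> F U) /\ (forall x, K x -> exists U, In U l /\ U x).

Definition hausdorff_set {T : Type} (op : (T -> Prop) -> Prop) (S : T -> Prop) : Prop :=
  forall x y, S x -> S y -> x <> y ->
    exists U V, op U /\ op V /\ U x /\ V y /\ (forall z, S z -> U z -> V z -> False).

Definition neighborhood {T : Type} (op : (T -> Prop) -> Prop) (x : T) (N : T -> Prop) : Prop :=
  exists U, op U /\ U x /\ (forall z, U z -> N z).

Definition locally_hausdorff_locally_compact {T : Type} (op : (T -> Prop) -> Prop) : Prop :=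
  forall x, exists N, neighborhood op x N /\ compact op N /\ hausdorff_set op N.

(** * Groupoids: unit space given as a predicate [unit] on G; [mul g h] is
    meaningful when s g = r h. *)
Record groupoid_axioms {G : Type} (unit : G -> Prop) (r s : G -> G)
  (mul : G -> G -> G) (inv : G -> G) : Prop := {
  gr_unit_r : forall g, unit (r g);
  gr_unit_s : forall g, unit (s g);
  gr_unit_rs : forall u, unit u -> r u = u /\ s u = u;
  gr_mul_r : forall g h, s g = r h -> r (mul g h) = r g;
  gr_mul_s : forall g h, s g = r h -> s (mul g h) = s h;
  gr_assoc : forall g h k, s g = r h -> s h = r k ->
               mul (mul g h) k = mul g (mul h k);
  gr_mul_runit : forall g, mul (r g) g = g;
  gr_mul_sunit : forall g, mul g (s g) = g;
  gr_inv_r : forall g, r (inv g) = s g;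
  gr_inv_s : forall g, s (inv g) = r g;
  gr_mul_inv : forall g, mul g (inv g) = r g;
  gr_inv_mul : forall g, mul (inv g) g = s g
}.

Definition lhlc_groupoid {G : Type} (opG : (G -> Prop) -> Prop) (unit : G -> Prop)
  (r s : G -> G) (mul : G -> G -> G) (inv : G -> G) : Prop :=
  is_topology opG /\
  groupoid_axioms unit r s mul inv /\
  continuous (sub_open (prod_open opG opG) (fun p : G * G => s (fst p) = r (snd p)))
             opG (fun p => mul (fst (proj1_sig p)) (snd (proj1_sig p))) /\
  continuous opG opG inv /\
  hausdorff_set opG unit /\
  locally_hausdorff_locally_compact opG /\
  (* range map r : G -> G^(0) is open (G^(0) with the relative topology) *)
  (forall U, opG U -> exists V, opG V /\
       forall u, image r U u <-> (V u /\ unit u)).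

Definition GX {G X : Type} (s : G -> G) (rX : X -> G) : Type :=
  {p : G * X | s (fst p) = rX (snd p)}.

Definition continuous_action {G X : Type} (opG : (G -> Prop) -> Prop)
  (opX : (X -> Prop) -> Prop) (unit : G -> Prop) (r s : G -> G) (mul : G -> G -> G)
  (rX : X -> G) (act : G -> X -> X) : Prop :=
  continuous opX opG rX /\
  (forall x, unit (rX x)) /\
  continuous (sub_open (prod_open opG opX) (fun p : G * X => s (fst p) = rX (snd p)))
             opX (fun p => act (fst (proj1_sig p)) (snd (proj1_sig p))) /\
  (forall x, act (rX x) x = x) /\
  (forall g x, s g = rX x -> rX (act g x) = r g) /\
  (forall g h x, s g = r h -> s h = rX x -> act (mul g h) x = act g (act h x)).

Definition Theta {G X : Type} (s : G -> G) (rX : X -> G) (act : G -> X -> X)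
  (p : GX s rX) : X * X :=
  (act (fst (proj1_sig p)) (snd (proj1_sig p)), snd (proj1_sig p)).

Definition GX_open {G X : Type} (opG : (G -> Prop) -> Prop) (opX : (X -> Prop) -> Prop)
  (s : G -> G) (rX : X -> G) : (GX s rX -> Prop) -> Prop :=
  sub_open (prod_open opG opX) (fun p : G * X => s (fst p) = rX (snd p)).

Arguments GX_open {G X} opG opX s rX _.
Arguments Theta {G X} s rX act p.

(** Nothing about the groupoid structure is needed beyond the continuity of
    [Theta]: the theorem is an instance of the general fact that a continuous
    map [f : A -> B] into a locally Hausdorff, locally compact space is proper
    (i.e. [f x id_C] is closed for every space [C]) iff preimages of compact
    sets are compact. *)

From Stdlib Require Import List Classical.

Lemma list_choice {T U : Type} (R : T -> U -> Prop) (l : list T) :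
  (forall t, In t l -> exists u, R t u) ->
  exists l' : list U, (forall t, In t l -> exists u, In u l' /\ R t u) /\
                     (forall u, In u l' -> exists t, In t l /\ R t u).
Proof.
  induction l as [|t l IH]; intros H.
  - exists nil; split; intros ? [].
  - destruct (H t (or_introl eq_refl)) as [u Hu].
    destruct IH as [l' [H1 H2]]. { intros t' Ht'; apply H; right; exact Ht'. }
    exists (u :: l'); split.
    + intros t' [<-|Ht'].
      * exists u; split; [left; reflexivity | exact Hu].
      * destruct (H1 t' Ht') as [u' [Hu1 Hu2]].
        exists u'; split; [right; exact Hu1 | exact Hu2].
    + intros u' [<-|Hu'].
      * exists t; split; [left; reflexivity | exact Hu].
      * destruct (H2 u' Hu') as [t' [Ht1 Ht2]].
        exists t'; split; [right; exact Ht1 | exact Ht2].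
Qed.

Lemma list_sep {T : Type} (P : T -> Prop) (l : list T) :
  exists l', forall x, In x l' <-> In x l /\ P x.
Proof.
  induction l as [|u l [l' Hl']].
  - exists nil; intros x; split; [intros [] | intros [[] _]].
  - destruct (classic (P u)) as [Hu|Hu].
    + exists (u :: l'); intros x; simpl; rewrite Hl'.
      split; [intros [<-|[? ?]] | intros [[<-|?] ?]]; auto.
    + exists l'; intros x; simpl; rewrite Hl'.
      split; [intros [? ?] | intros [[<-|?] ?]]; tauto.
Qed.

Definition union_list {T : Type} (l : list (T -> Prop)) : T -> Prop :=
  fun x => exists U, In U l /\ U x.

Lemma fin_inter {T : Type} (op : (T -> Prop) -> Prop) (Ht : is_topology op)
  (l : list (T -> Prop)) : (forall U, In U l -> op U) ->
  exists O, op O /\ forall x, O x <-> forall U, In U l -> U x.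
Proof.
  destruct Ht as [HT [HI _]].
  induction l as [|u l IH]; intros H.
  - exists (fun _ => True); split; [exact HT|].
    intros x; split; [intros _ U [] | intros _; exact I].
  - destruct IH as [O [HO HO']]. { intros U HU; apply H; right; exact HU. }
    exists (fun x => u x /\ O x); split.
    + apply HI; [apply H; left; reflexivity | exact HO].
    + intros x; rewrite HO'; simpl; split.
      * intros [H1 H2] U [<-|HU]; [exact H1 | exact (H2 U HU)].
      * intros H3; split; [apply H3; left; reflexivity | intros U HU; apply H3; right; exact HU].
Qed.

Lemma prod_topology {A B : Type} (opA : (A -> Prop) -> Prop) (opB : (B -> Prop) -> Prop) :
  is_topology opA -> is_topology opB -> is_topology (prod_open opA opB).
Proof.
  intros [HA1 [HA2 HA3]] [HB1 [HB2 HB3]]; split; [|split].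
  - intros p _. exists (fun _ => True), (fun _ => True); repeat split; auto.
  - intros U V HU HV p [Hp1 Hp2].
    destruct (HU p Hp1) as [U1 [V1 [Ha1 [Hb1 [Hc1 [Hd1 H1]]]]]].
    destruct (HV p Hp2) as [U2 [V2 [Ha2 [Hb2 [Hc2 [Hd2 H2]]]]]].
    exists (fun a => U1 a /\ U2 a), (fun b => V1 b /\ V2 b); repeat split; auto;
      [apply H1 | apply H2]; tauto.
  - intros F HF p [W [HFW HW]].
    destruct (HF W HFW p HW) as [U1 [V1 [Ha1 [Hb1 [Hc1 [Hd1 H1]]]]]].
    exists U1, V1; repeat split; auto. intros a b Ha Hb; exists W; split; auto.
Qed.

Lemma compact_finite_choice {T L : Type} (op : (T -> Prop) -> Prop) (K : T -> Prop)
  (Q : (T -> Prop) -> L -> Prop) :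
  compact op K ->
  (forall x, K x -> exists U y, op U /\ U x /\ Q U y) ->
  exists ps : list ((T -> Prop) * L),
    (forall p, In p ps -> op (fst p) /\ Q (fst p) (snd p)) /\
    (forall x, K x -> exists p, In p ps /\ fst p x).
Proof.
  intros HK Hloc.
  destruct (HK (fun U => op U /\ exists y, Q U y)) as [l [Hl Hcov]].
  - intros U [HU _]; exact HU.
  - intros x Hx. destruct (Hloc x Hx) as [U [y [HU [HUx HQ]]]].
    exists U; split; [split; [exact HU | exists y; exact HQ] | exact HUx].
  - destruct (list_choice (fun U p => fst p = U /\ Q U (snd p)) l) as [ps [H1 H2]].
    { intros U HU. destruct (Hl U HU) as [_ [y Hy]]. exists (U, y); auto. }
    exists ps; split.
    + intros p Hp. destruct (H2 p Hp) as [U [HU [-> HQ]]].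
      split; [apply (Hl U HU) | exact HQ].
    + intros x Hx. destruct (Hcov x Hx) as [U [HU HUx]].
      destruct (H1 U HU) as [p [Hp [<- _]]]. exists p; auto.
Qed.

Lemma compact_singleton {T : Type} (op : (T -> Prop) -> Prop) (b : T) :
  compact op (fun y => y = b).
Proof.
  intros F HFo Hcov. destruct (Hcov b eq_refl) as [U [HU HUb]].
  exists (U :: nil); split.
  - intros V [<-|[]]; exact HU.
  - intros x ->; exists U; split; [left; reflexivity | exact HUb].
Qed.

Lemma compact_image {A B : Type} (opA : (A -> Prop) -> Prop) (opB : (B -> Prop) -> Prop)
  (f : A -> B) (Hf : continuous opA opB f) (S : A -> Prop) :
  compact opA S -> compact opB (image f S).
Proof.
  intros HS F HFo Hcov.
  destruct (compact_finite_choice opA S (fun U V => F V /\ forall a, U a -> V (f a)) HS)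
    as [ps [Hps Hcovps]].
  - intros a Ha. destruct (Hcov (f a) (ex_intro _ a (conj Ha eq_refl))) as [V [HV HVa]].
    exists (fun a => V (f a)), V; repeat split; auto.
  - exists (map snd ps); split.
    + intros V HV. apply in_map_iff in HV. destruct HV as [p [<- Hp]].
      apply (Hps p Hp).
    + intros y [a [Ha <-]]. destruct (Hcovps a Ha) as [p [Hp Hpa]].
      exists (snd p); split; [apply in_map; exact Hp | apply (Hps p Hp); exact Hpa].
Qed.

Lemma compact_minus {T : Type} (op : (T -> Prop) -> Prop) (K : T -> Prop)
  (l : list (T -> Prop)) : compact op K -> (forall U, In U l -> op U) ->
  compact op (fun a => K a /\ ~ union_list l a).
Proof.
  intros HK Hl F HFo Hcov.
  destruct (HK (fun U => F U \/ In U l)) as [l' [Hl'1 Hl'2]].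
  - intros U [HU|HU]; [apply HFo, HU | apply Hl, HU].
  - intros a Ha. destruct (classic (union_list l a)) as [[U [HU HUa]]|Hn].
    + exists U; split; auto.
    + destruct (Hcov a (conj Ha Hn)) as [U [HU HUa]]; exists U; split; auto.
  - destruct (list_sep F l') as [l'' Hl''].
    exists l''; split; [intros U HU; apply Hl'', HU|].
    intros a [Ha Hn]. destruct (Hl'2 a Ha) as [U [HU HUa]].
    destruct (Hl'1 U HU) as [HFU|HUl].
    + exists U; split; [apply Hl''; auto | exact HUa].
    + exfalso; apply Hn; exists U; auto.
Qed.

Lemma slice_tube {A B : Type} (opA : (A -> Prop) -> Prop) (opB : (B -> Prop) -> Prop)
  (HA : is_topology opA) (K2 : B -> Prop) (F : (A * B -> Prop) -> Prop) (x1 : A) :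
  compact opB K2 -> (forall W, F W -> prod_open opA opB W) ->
  (forall x2, K2 x2 -> exists W, F W /\ W (x1, x2)) ->
  exists U Ws, opA U /\ U x1 /\
    (forall W, In W Ws -> F W) /\ forall a b, U a -> K2 b -> union_list Ws (a, b).
Proof.
  intros HK2 HFo Hcov.
  destruct (compact_finite_choice opB K2 (fun V (p : (A -> Prop) * (A * B -> Prop)) =>
        opA (fst p) /\ fst p x1 /\ F (snd p) /\ forall a b, fst p a -> V b -> snd p (a, b))
        HK2) as [ps [Hps Hcovps]].
  - intros x2 Hx2. destruct (Hcov x2 Hx2) as [W [HFW HW]].
    destruct (HFo W HFW (x1, x2) HW) as [U [V [HU [HV [HUx [HVx HUV]]]]]].
    exists V, (U, W); repeat split; auto.
  - destruct (fin_inter opA HA (map (fun p => fst (snd p)) ps)) as [O [HO HO']].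
    { intros U HU. apply in_map_iff in HU. destruct HU as [p [<- Hp]]. apply (Hps p Hp). }
    exists O, (map (fun p => snd (snd p)) ps); repeat split; [exact HO | | |].
    + apply HO'. intros U HU. apply in_map_iff in HU. destruct HU as [p [<- Hp]].
      apply (Hps p Hp).
    + intros W HW. apply in_map_iff in HW. destruct HW as [p [<- Hp]]. apply (Hps p Hp).
    + intros a b Ha Hb. destruct (Hcovps b Hb) as [p [Hp Hpb]].
      exists (snd (snd p)); split; [apply (in_map (fun p => snd (snd p))); exact Hp|].
      apply (Hps p Hp); [|exact Hpb].
      apply (proj1 (HO' a) Ha). apply (in_map (fun p => fst (snd p))); exact Hp.
Qed.

(** Tychonoff for two factors: cover [K1] by the tubes of [slice_tube]. *)
Lemma tychonoff2 {A B : Type} (opA : (A -> Prop) -> Prop) (opB : (B -> Prop) -> Prop)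
  (HA : is_topology opA) (K1 : A -> Prop) (K2 : B -> Prop) :
  compact opA K1 -> compact opB K2 ->
  compact (prod_open opA opB) (fun q => K1 (fst q) /\ K2 (snd q)).
Proof.
  intros HK1 HK2 F HFo Hcov.
  destruct (compact_finite_choice opA K1 (fun U Ws => (forall W, In W Ws -> F W) /\
       forall a b, U a -> K2 b -> union_list Ws (a, b)) HK1) as [ps [Hps Hcovps]].
  { intros x1 Hx1.
    destruct (slice_tube opA opB HA K2 F x1 HK2 HFo) as [U [Ws [HU [HUx HWs]]]].
    - intros x2 Hx2. exact (Hcov (x1, x2) (conj Hx1 Hx2)).
    - exists U, Ws; auto. }
  exists (flat_map snd ps); split.
  - intros W HW. apply in_flat_map in HW. destruct HW as [p [Hp HW]]. apply (Hps p Hp), HW.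
  - intros [a b] [Ha Hb]. destruct (Hcovps a Ha) as [p [Hp Hpa]].
    destruct (proj2 (proj2 (Hps p Hp)) a b Hpa Hb) as [W [HW HWab]].
    exists W; split; [apply in_flat_map; exists p; auto | exact HWab].
Qed.

Lemma separate {B : Type} (opB : (B -> Prop) -> Prop) (HB : is_topology opB)
  (N L : B -> Prop) (b : B) : hausdorff_set opB N -> compact opB L ->
  (forall y, L y -> N y) -> N b -> ~ L b ->
  exists O, opB O /\ O b /\ forall z, N z -> O z -> ~ L z.
Proof.
  intros HN HL HLN Hb HLb.
  destruct (compact_finite_choice opB L
     (fun V U => opB U /\ U b /\ forall z, N z -> V z -> U z -> False) HL) as [ps [Hps Hcovps]].
  - intros y Hy. assert (y <> b) by (intros ->; contradiction).
    destruct (HN y b (HLN y Hy) Hb H) as [U [V [HU [HV [HUy [HVb Hd]]]]]].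
    exists U, V; repeat split; auto.
  - destruct (fin_inter opB HB (map snd ps)) as [O [HO HO']].
    { intros U HU. apply in_map_iff in HU. destruct HU as [p [<- Hp]]. apply (Hps p Hp). }
    exists O; split; [exact HO | split].
    + apply HO'. intros U HU. apply in_map_iff in HU. destruct HU as [p [<- Hp]].
      apply (Hps p Hp).
    + intros z Hz HOz HLz. destruct (Hcovps z HLz) as [p [Hp Hpz]].
      apply (proj2 (proj2 (proj2 (Hps p Hp))) z Hz Hpz).
      apply (proj1 (HO' z) HOz). apply in_map; exact Hp.
Qed.

Lemma hausdorff_prod {A B : Type} (opA : (A -> Prop) -> Prop) (opB : (B -> Prop) -> Prop)
  (HA : is_topology opA) (HB : is_topology opB) (N1 : A -> Prop) (N2 : B -> Prop) :
  hausdorff_set opA N1 -> hausdorff_set opB N2 ->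
  hausdorff_set (prod_open opA opB) (fun q => N1 (fst q) /\ N2 (snd q)).
Proof.
  intros HN1 HN2 [a1 a2] [b1 b2] [Ha1 Ha2] [Hb1 Hb2] Hne; simpl in *.
  destruct (classic (a1 = b1)) as [E1|E1].
  - assert (E2 : a2 <> b2) by (intros E2; apply Hne; subst; reflexivity).
    destruct (HN2 a2 b2 Ha2 Hb2 E2) as [U [V [HU [HV [HUa [HVb Hd]]]]]].
    exists (fun q => U (snd q)), (fun q => V (snd q)); repeat split; auto.
    + intros p Hp. exists (fun _ => True), U; repeat split; auto. apply HA.
    + intros p Hp. exists (fun _ => True), V; repeat split; auto. apply HA.
    + intros [z1 z2] [_ Hz] HUz HVz. exact (Hd z2 Hz HUz HVz).
  - destruct (HN1 a1 b1 Ha1 Hb1 E1) as [U [V [HU [HV [HUa [HVb Hd]]]]]].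
    exists (fun q => U (fst q)), (fun q => V (fst q)); repeat split; auto.
    + intros p Hp. exists U, (fun _ => True); repeat split; auto. apply HB.
    + intros p Hp. exists V, (fun _ => True); repeat split; auto. apply HB.
    + intros [z1 z2] [Hz _] HUz HVz. exact (Hd z1 Hz HUz HVz).
Qed.

Lemma lhlc_prod {A B : Type} (opA : (A -> Prop) -> Prop) (opB : (B -> Prop) -> Prop)
  (HA : is_topology opA) (HB : is_topology opB) :
  locally_hausdorff_locally_compact opA -> locally_hausdorff_locally_compact opB ->
  locally_hausdorff_locally_compact (prod_open opA opB).
Proof.
  intros HlA HlB [x1 x2].
  destruct (HlA x1) as [N1 [[U1 [HU1 [HU1x HU1N]]] [HN1c HN1h]]].
  destruct (HlB x2) as [N2 [[U2 [HU2 [HU2x HU2N]]] [HN2c HN2h]]].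
  exists (fun q => N1 (fst q) /\ N2 (snd q)); split; [|split].
  - exists (fun q => U1 (fst q) /\ U2 (snd q)); repeat split; auto.
    + intros p [Hp1 Hp2]. exists U1, U2; repeat split; auto.
    + apply HU1N; tauto.
    + apply HU2N; tauto.
  - apply tychonoff2; auto.
  - apply hausdorff_prod; auto.
Qed.

Lemma continuous_pair_sub {T Y1 Y2 : Type} (opT : (T -> Prop) -> Prop) (P : T -> Prop)
  (op1 : (Y1 -> Prop) -> Prop) (op2 : (Y2 -> Prop) -> Prop)
  (f1 : {x : T | P x} -> Y1) (f2 : {x : T | P x} -> Y2) :
  is_topology opT ->
  continuous (sub_open opT P) op1 f1 -> continuous (sub_open opT P) op2 f2 ->
  continuous (sub_open opT P) (prod_open op1 op2) (fun x => (f1 x, f2 x)).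
Proof.
  intros [_ [HI HU]] Hf1 Hf2 W HW.
  (* the preimage of [W] is the union of the pulled-back open boxes inside [W] *)
  set (Box := fun S : T -> Prop => exists U1 U2 V1 V2, op1 U1 /\ op2 U2 /\
     (forall a b, U1 a -> U2 b -> W (a, b)) /\ opT V1 /\ opT V2 /\
     (forall x, U1 (f1 x) <-> V1 (proj1_sig x)) /\
     (forall x, U2 (f2 x) <-> V2 (proj1_sig x)) /\ S = (fun t => V1 t /\ V2 t)).
  exists (fun t => exists S, Box S /\ S t); split.
  - apply HU. intros S [U1 [U2 [V1 [V2 [_ [_ [_ [HV1 [HV2 [_ [_ ->]]]]]]]]]]].
    apply HI; assumption.
  - intros x; split.
    + intros Hx. destruct (HW _ Hx) as [U1 [U2 [HU1 [HU2 [Hx1 [Hx2 Hbox]]]]]].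
      destruct (Hf1 U1 HU1) as [V1 [HV1 E1]]; destruct (Hf2 U2 HU2) as [V2 [HV2 E2]].
      exists (fun t => V1 t /\ V2 t); split.
      * exists U1, U2, V1, V2; repeat (split; [assumption|]); reflexivity.
      * split; [apply E1 | apply E2]; assumption.
    + intros [S [[U1 [U2 [V1 [V2 [_ [_ [Hbox [_ [_ [E1 [E2 ->]]]]]]]]]]] [HS1 HS2]]].
      apply Hbox; [apply E1 | apply E2]; assumption.
Qed.

Lemma sub_snd_continuous {A B : Type} (opA : (A -> Prop) -> Prop)
  (opB : (B -> Prop) -> Prop) (P : A * B -> Prop) :
  is_topology opA ->
  continuous (sub_open (prod_open opA opB) P) opB (fun p => snd (proj1_sig p)).
Proof.
  intros HA U HU. exists (fun q => U (snd q)); split.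
  - intros q Hq. exists (fun _ => True), U; repeat split; auto. apply HA.
  - intros x; reflexivity.
Qed.

(** ** Proper maps have compact preimages of compact sets *)

(** Auxiliary space for the proof: the finite subfamilies [Some l] of a
    family [F] of sets, together with a point [None], whose neighbourhoods
    contain all the finite subfamilies extending a fixed one. *)
Definition subfamily_open {A : Type} (F : (A -> Prop) -> Prop)
  (V : option (list (A -> Prop)) -> Prop) : Prop :=
  V None -> exists l0, (forall W, In W l0 -> F W) /\ forall l, incl l0 l -> V (Some l).

Lemma subfamily_topology {A : Type} (F : (A -> Prop) -> Prop) :
  is_topology (subfamily_open F).
Proof.
  split; [|split].
  - intros _. exists nil; split; [intros ? [] | intros; exact I].
  - intros U V HU HV [HU0 HV0].
    destruct (HU HU0) as [l0 [H01 H02]]. destruct (HV HV0) as [l1 [H11 H12]].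
    exists (l0 ++ l1); split.
    + intros W HW; apply in_app_or in HW; destruct HW; auto.
    + intros l Hl; apply incl_app_inv in Hl; split; [apply H02 | apply H12]; tauto.
  - intros Fm HFm [U [HU HU0]]. destruct (HFm U HU HU0) as [l0 [H01 H02]].
    exists l0; split; auto. intros l Hl; exists U; split; auto.
Qed.

Definition uncovered {A : Type} (F : (A -> Prop) -> Prop)
  (q : A * option (list (A -> Prop))) : Prop :=
  match snd q with
  | Some l => ~ exists W, In W l /\ F W /\ W (fst q)
  | None => ~ exists W, F W /\ W (fst q)
  end.

Lemma uncovered_closed {A : Type} (opA : (A -> Prop) -> Prop) (F : (A -> Prop) -> Prop) :
  (forall W, F W -> opA W) ->
  closed (prod_open opA (subfamily_open F)) (uncovered F).
Proof.
  intros HFo [a [l|]] Hq; unfold uncovered in Hq; simpl in Hq; apply NNPP in Hq.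
  - destruct Hq as [W [HWl [HFW HWa]]].
    exists W, (fun c => c = Some l); repeat split; auto.
    + intros H; discriminate.
    + intros a' c' Ha' ->. unfold uncovered; simpl. intros Hn; apply Hn; exists W; auto.
  - destruct Hq as [W [HFW HWa]].
    exists W, (fun c => match c with None => True | Some l => In W l end); repeat split; auto.
    + intros _. exists (W :: nil); split.
      * intros V [<-|[]]; exact HFW.
      * intros l Hl; apply Hl; left; reflexivity.
    + intros a' [l|] Ha' Hc; unfold uncovered; simpl; intros Hn; apply Hn; exists W; auto.
Qed.

Lemma proper_preimage_compact {A B : Type} (opA : (A -> Prop) -> Prop)
  (opB : (B -> Prop) -> Prop) (f : A -> B) :
  proper_map opA opB f -> forall K, compact opB K -> compact opA (fun a => K (f a)).
Proof.
  intros Hproper K HK F HFo Hcov.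
  pose proof (Hproper _ _ (subfamily_topology F) _ (uncovered_closed opA F HFo)) as Himg.
  (* each y in K has a neighbourhood whose preimage is covered by a finite
     subfamily: closedness of the image of [uncovered F] near (y, None) *)
  assert (Hloc : forall y, K y -> exists U l0, opB U /\ U y /\
     (forall W, In W l0 -> F W) /\ forall a, U (f a) -> union_list l0 a).
  { intros y Hy.
    assert (Hni : ~ image (fun q : A * option (list (A -> Prop)) => (f (fst q), snd q))
                          (uncovered F) (y, None)).
    { intros [[a c] [HZq Heq]]. injection Heq; intros -> Hfa.
      unfold uncovered in HZq; simpl in HZq. subst y. apply HZq, (Hcov a Hy). }
    destruct (Himg (y, None) Hni) as [U [V [HU [HV [HUy [HV0 HUV]]]]]].
    destruct (HV HV0) as [l0 [H01 H02]].
    exists U, l0; repeat split; auto.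
    intros a Ha. specialize (HUV (f a) (Some l0) Ha (H02 l0 (incl_refl l0))).
    apply NNPP; intros Hne. apply HUV. exists (a, Some l0); split; [|reflexivity].
    unfold uncovered; simpl. intros [W [HW1 [_ HW3]]]; apply Hne; exists W; auto. }
  destruct (compact_finite_choice opB K (fun U l0 => (forall W, In W l0 -> F W) /\
       forall a, U (f a) -> union_list l0 a) HK) as [ps [Hps Hcovps]].
  { intros y Hy. destruct (Hloc y Hy) as [U [l0 [HU [HUy H]]]]. exists U, l0; auto. }
  exists (flat_map snd ps); split.
  - intros W HW. apply in_flat_map in HW. destruct HW as [p [Hp HW]]. apply (Hps p Hp), HW.
  - intros a Ha. destruct (Hcovps (f a) Ha) as [p [Hp Hpa]].
    destruct (proj2 (proj2 (Hps p Hp)) a Hpa) as [W [HW HWa]].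
    exists W; split; [apply in_flat_map; exists p; auto | exact HWa].
Qed.

(** ** Maps with compact preimages of compact sets are proper *)

Lemma closed_tube {A C : Type} (opA : (A -> Prop) -> Prop) (opC : (C -> Prop) -> Prop)
  (HC : is_topology opC) (K : A -> Prop) (Z : A * C -> Prop) (c : C) :
  compact opA K -> closed (prod_open opA opC) Z -> (forall a, K a -> ~ Z (a, c)) ->
  exists (l : list (A -> Prop)) (V : C -> Prop),
    (forall U, In U l -> opA U) /\ (forall a, K a -> union_list l a) /\
    opC V /\ V c /\ forall a c', union_list l a -> V c' -> ~ Z (a, c').
Proof.
  intros HK HZ HKc.
  destruct (compact_finite_choice opA K
     (fun U V => opC V /\ V c /\ forall a c', U a -> V c' -> ~ Z (a, c')) HK)
     as [ps [Hps Hcovps]].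
  - intros a Ha. destruct (HZ (a, c) (HKc a Ha)) as [U [V [HU [HV [HUa [HVc HUV]]]]]].
    exists U, V; repeat split; auto.
  - destruct (fin_inter opC HC (map snd ps)) as [V0 [HV0 HV0']].
    { intros V HV. apply in_map_iff in HV. destruct HV as [p [<- Hp]]. apply (Hps p Hp). }
    exists (map fst ps), V0; repeat split; [| | exact HV0 | |].
    + intros U HU. apply in_map_iff in HU. destruct HU as [p [<- Hp]]. apply (Hps p Hp).
    + intros a Ha. destruct (Hcovps a Ha) as [p [Hp Hpa]].
      exists (fst p); split; [apply in_map; exact Hp | exact Hpa].
    + apply HV0'. intros V HV. apply in_map_iff in HV. destruct HV as [p [<- Hp]].
      apply (Hps p Hp).
    + intros a c' [U [HU HUa]] Hc'. apply in_map_iff in HU. destruct HU as [p [<- Hp]].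
      apply (proj2 (proj2 (proj2 (Hps p Hp))) a c' HUa).
      apply (proj1 (HV0' c') Hc'). apply in_map; exact Hp.
Qed.

Lemma compact_preimage_proper {A B : Type} (opA : (A -> Prop) -> Prop)
  (opB : (B -> Prop) -> Prop) (f : A -> B) (HB : is_topology opB)
  (HBl : locally_hausdorff_locally_compact opB) (Hf : continuous opA opB f)
  (Hc : forall K, compact opB K -> compact opA (fun a => K (f a))) :
  proper_map opA opB f.
Proof.
  intros C opC HC Z HZ [b c] Hn.
  (* a tube O x V0 around the compact fibre over b misses Z *)
  destruct (closed_tube opA opC HC (fun a => f a = b) Z c (Hc _ (compact_singleton opB b)) HZ)
    as [l [V0 [Hl [Hfib [HV0 [HV0c HW]]]]]].
  { intros a Ha HZa. apply Hn. exists (a, c); simpl; rewrite Ha; auto. }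
  (* inside a compact Hausdorff neighbourhood N of b, the compact set
     L = f(f^-1(N) \ O) misses b and can be separated from it *)
  destruct (HBl b) as [N [[U0 [HU0 [HU0b HU0N]]] [HNc HNh]]].
  set (L := image f (fun a => N (f a) /\ ~ union_list l a)).
  assert (HLc : compact opB L) by (apply (compact_image opA opB f Hf), compact_minus; auto).
  destruct (separate opB HB N L b HNh HLc) as [O [HO [HOb HOL]]].
  - intros y [a [[Ha _] <-]]; exact Ha.
  - apply HU0N, HU0b.
  - intros [a [[_ Hla] Hab]]. apply Hla, Hfib, Hab.
  - exists (fun y => O y /\ U0 y), V0. repeat split; auto.
    + apply HB; auto.
    + intros y c' [HOy HU0y] Hc' [[a c''] [HZq Heq]]. simpl in Heq.
      injection Heq; intros -> <-.
      destruct (classic (union_list l a)) as [Hla|Hla].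
      * exact (HW a c' Hla Hc' HZq).
      * apply (HOL (f a) (HU0N _ HU0y) HOy). exists a; split; auto.
Qed.

Lemma Theta_continuous (G X : Type) (opG : (G -> Prop) -> Prop) (opX : (X -> Prop) -> Prop)
  (unit : G -> Prop) (r s : G -> G) (mul : G -> G -> G) (rX : X -> G) (act : G -> X -> X)
  (HGtop : is_topology opG) (HXtop : is_topology opX)
  (Hact : continuous_action opG opX unit r s mul rX act) :
  continuous (GX_open opG opX s rX) (prod_open opX opX) (Theta s rX act).
Proof.
  destruct Hact as [_ [_ [Hact_cont _]]].
  apply continuous_pair_sub; [apply prod_topology; assumption | exact Hact_cont |].
  apply sub_snd_continuous; exact HGtop.
Qed.

Theorem mainTheorem2 (G X : Type) (opG : (G -> Prop) -> Prop) (opX : (X -> Prop) -> Prop)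
  (unit : G -> Prop) (r s : G -> G) (mul : G -> G -> G) (inv : G -> G)
  (rX : X -> G) (act : G -> X -> X)
  (HG : lhlc_groupoid opG unit r s mul inv)
  (HXtop : is_topology opX)
  (HX : locally_hausdorff_locally_compact opX)
  (Hact : continuous_action opG opX unit r s mul rX act) :
  proper_map (GX_open opG opX s rX) (prod_open opX opX) (Theta s rX act) <->
  (forall W : X * X -> Prop, compact (prod_open opX opX) W ->
     compact (GX_open opG opX s rX) (fun p => W (Theta s rX act p))).
Proof.
  destruct HG as [HGtop _].
  split.
  - apply proper_preimage_compact.
  - apply compact_preimage_proper.
    + apply prod_topology; exact HXtop.
    + apply lhlc_prod; assumption.
    + eapply Theta_continuous; eassumption.
Qed.
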